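(* Let $\bar\alpha=(\alpha_1,\dots,\alpha_n)$ and $\bar z=(z_1,\dots,z_k)$ be sequences of pairwise distinct complex numbers. For every $(\boldsymbol l,\boldsymbol m)\in\mathcal Z_{kn}$, the subspace $\mathfrak P_{kn}[\boldsymbol l,\boldsymbol m]\subset\mathfrak P_{kn}$ is invariant under $\pi^{\langle n\rangle}_{\bar z}(\mathcal B^{\langle n\rangle}_{\bar\alpha})$ and under $\pi^{\langle k\rangle}_{-\bar\alpha}(\mathcal B^{\langle k\rangle}_{\bar z})$.
   Context: $\mathfrak P_{kn}$ is the space of polynomials in pairwise anticommuting variables $\xi_{ai}$ ($a\le k$, $i\le n$); the left derivation $\partial_{ai}$ sends a monomial $\xi_{c_1}\cdots\xi_{c_l}$ to $(-1)^{s-1}$ times the monomial with the $s$-th factor removed if $c_s=(a,i)$, and to $0$ otherwise. $\pi^{\langle n\rangle}_{\bar z}(e^{\langle n\rangle}_{ij}\otimes t^s)=\sum_a z_a^s\xi_{ai}\partial_{aj}$ and $\pi^{\langle k\rangle}_{-\bar\alpha}(e^{\langle k\rangle}_{ab}\otimes t^s)=\sum_i(-\alpha_i)^s\xi_{ai}\partial_{bi}$ define actions of $\mathfrak{gl}_n[t]$ and $\mathfrak{gl}_k[t]$. $\mathcal Z_{kn}$ is the set of $(\boldsymbol l,\boldsymbol m)\in\mathbb Z_{\ge0}^k\times\mathbb Z_{\ge0}^n$ with $l_a\le n$, $m_i\le k$, $\sum_al_a=\sum_im_i$; $\mathfrak P_{kn}[\boldsymbol l,\boldsymbol m]$ is spanned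 by monomials $\prod\xi_{ai}^{d_{ai}}$, $d_{ai}\in\{0,1\}$, with $\sum_ad_{ai}=m_i$ and $\sum_id_{ai}=l_a$. Bethe algebra: for $\mathfrak{gl}_N[t]$ with generators $e_{ij}$ and $g(x)=\sum_{s\ge0}(g\otimes t^s)x^{-s-1}$, and pairwise distinct $\bar\beta\in\mathbb C^N$, write $\operatorname{rdet}\bigl((\tfrac d{dx}-\beta_i)\delta_{ij}-e_{ji}(x)\bigr)_{i,j=1}^N=(d/dx)^N+\sum_iB_i(x)(d/dx)^{N-i}$ (powers of $d/dx$ on the right, $\operatorname{rdet}A=\sum_\sigma(-1)^\sigma a_{1\sigma(1)}\cdots a_{N\sigma(N)}$), $B_i(x)=\sum_{j\ge0}B_{ij}x^{-j}$; $\mathcal B^{\langle N\rangle}_{\bar\beta}$ is the subalgebra of $U(\mathfrak{gl}_N[t])$ generated by the $B_{ij}$, $j\ge1$. *)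

From HB Require Import structures.
From mathcomp Require Import all_boot all_order all_algebra all_fingroup.
From mathcomp Require Import Rstruct complex.
From Stdlib Require Reals.

Set Implicit Arguments.
Unset Strict Implicit.
Unset Printing Implicit Defensive.

Import Order.TTheory GRing.Theory Num.Theory.
Local Open Scope ring_scope.

Definition Cplx : fieldType := Rdefinitions.R[i].

(* differential operators  sum_p c_p(x) (d/dx)^p  (powers of d/dx on  *)
(* the right), all over a (possibly noncommutative) ring A.           *)
Section DiffOps.
Variable A : pzRingType.

(* a series f stands for  sum_{j>=0} f j * x^{-j} *)
Definition series := nat -> A.

Definition ser0 : series := fun _ => 0.
Definition ser1 : series := fun j => if j == 0%N then 1 else 0.
Definition serC (a : A) : series := fun j => if j == 0%N then a else 0.
Definition seradd (f g : series) : series := fun j => f j + g j.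
Definition seropp (f : series) : series := fun j => - f j.
Definition sermul (f g : series) : series :=
  fun j => \sum_(m < j.+1) f m * g (j - m)%N.
Definition sermuln (f : series) (c : nat) : series := fun j => f j *+ c.
(* d/dx applied to a series:  d/dx x^{-j} = -j x^{-j-1} *)
Definition serD (f : series) : series :=
  fun j => if j is j'.+1 then - (f j' *+ j') else 0.

(* a differential operator: the p-th entry is the coefficient of (d/dx)^p *)
Definition dop := seq series.

Definition dcoef (P : dop) (p : nat) : series := nth ser0 P p.

Definition dop0 : dop := [::].
Definition dop1 : dop := [:: ser1].
Definition dopD : dop := [:: ser0; ser1].
Definition dopS (f : series) : dop := [:: f].

Definition dadd (P Q : dop) : dop :=
  mkseq (fun p => seradd (dcoef P p) (dcoef Q p)) (maxn (size P) (size Q)).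
Definition dopp (P : dop) : dop := map seropp P.

(* (c (d/dx)^p) (d (d/dx)^q) = sum_r binom(p,r) c d^{(r)} (d/dx)^{p-r+q} *)
Definition dmul_term (P Q : dop) (s j p q r : nat) : A :=
  if (p - r + q)%N == s then
    sermul (dcoef P p) (iter r serD (dcoef Q q)) j *+ 'C(p, r)
  else 0.

Definition dmul (P Q : dop) : dop :=
  mkseq (fun s => fun j : nat =>
    \sum_(p < size P) \sum_(q < size Q) \sum_(r < p.+1)
      dmul_term P Q s j p q r)
    (size P + size Q).

Definition rdet (N : nat) (M : 'I_N -> 'I_N -> dop) : dop :=
  foldr dadd dop0
    [seq (let t := foldr (fun i acc => dmul (M i (s i)) acc) dop1 (enum 'I_N) in
          if odd_perm s then dopp t else t) | s : 'S_N <- enum [set: 'S_N]].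

(* Given the images  rep i j s  of  e_ij (x) t^s  in A and the scalars
   beta_i (already embedded in A), the matrix
   ((d/dx - beta_i) delta_ij - e_ji(x))_{ij},  e_ji(x) = sum_s e_ji t^s x^{-s-1}. *)
Definition gen_series (N : nat) (rep : 'I_N -> 'I_N -> nat -> A)
    (i j : 'I_N) : series :=
  fun l => if l is s.+1 then rep i j s else 0.

Definition bethe_matrix (N : nat) (rep : 'I_N -> 'I_N -> nat -> A)
    (beta : 'I_N -> A) (i j : 'I_N) : dop :=
  dadd (if i == j then dadd dopD (dopS (serC (- beta i))) else dop0)
       (dopp (dopS (gen_series rep j i))).

(* rdet = (d/dx)^N + sum_i B_i(x) (d/dx)^{N-i},  B_i(x) = sum_j B_ij x^{-j};
   this is the image of B_ij under the representation. *)
Definition bethe_coef (N : nat) (rep : 'I_N -> 'I_N -> nat -> A)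
    (beta : 'I_N -> A) (i j : nat) : A :=
  dcoef (rdet (bethe_matrix rep beta)) (N - i) j.

End DiffOps.

Inductive gen_alg (F : fieldType) (d : nat) (G : 'M[F]_d -> Prop)
    : 'M[F]_d -> Prop :=
  | ga_gen M : G M -> gen_alg G M
  | ga_one : gen_alg G 1%:M
  | ga_scale c M : gen_alg G M -> gen_alg G (c *: M)
  | ga_add M1 M2 : gen_alg G M1 -> gen_alg G M2 -> gen_alg G (M1 + M2)
  | ga_mul M1 M2 : gen_alg G M1 -> gen_alg G M2 -> gen_alg G (M1 *m M2).

(* Image of the Bethe algebra B^<N>_beta under a representation rep of gl_N[t]:
   the subalgebra generated by the images of B_ij, 1 <= i <= N, j >= 1. *)
Definition bethe_image (F : fieldType) (d N : nat)
    (rep : 'I_N -> 'I_N -> nat -> 'M[F]_d) (beta : 'I_N -> F) : 'M[F]_d -> Prop :=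
  gen_alg (fun M => exists i j : nat,
             [/\ (1 <= i <= N)%N, (1 <= j)%N &
                 M = bethe_coef rep (fun a => (beta a)%:M) i j]).

(* The Grassmann algebra P_kn with anticommuting generators xi_{ai}.  *)
(* Basis: monomials = subsets S of 'I_k * 'I_n, each written as the   *)
(* product of its variables in increasing order (order = enum_rank).  *)
(* P_kn = 'cV[F]_(dimP k n), basis vector r <-> subset enum_val r.   *)
Section Grassmann.
Variables (F : fieldType) (k n : nat).

Definition var := ('I_k * 'I_n)%type.
Definition monT := {set var}.
Definition dimP := #|{: monT}|.
Definition mon (r : 'I_dimP) : monT := enum_val (r : 'I_#|{: monT}|).
Definition varlt (u v : var) : bool := (enum_rank u < enum_rank v)%N.

(* matrix of the operator xi_u d_v:
   d_v (canonical monomial S, v at position s) = (-1)^{s-1} (S \ v),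
   xi_u (canonical monomial S') = (-1)^{#{w in S' | w < u}} (S' + u)  or 0. *)
Definition xi_d (u v : var) : 'M[F]_dimP :=
  \matrix_(r, c)
    (let S := mon c in
     if [&& v \in S, u \notin S :\ v & mon r == u |: (S :\ v)] then
       (-1) ^+ (#|[set w in S | varlt w v]| + #|[set w in S :\ v | varlt w u]|)
     else 0).

Definition pi_n (z : 'I_k -> F) (i j : 'I_n) (s : nat) : 'M[F]_dimP :=
  \sum_(a < k) (z a ^+ s) *: xi_d (a, i) (a, j).

Definition pi_k (alpha : 'I_n -> F) (a b : 'I_k) (s : nat) : 'M[F]_dimP :=
  \sum_(i < n) ((- alpha i) ^+ s) *: xi_d (a, i) (b, i).

Definition Zkn (l : 'I_k -> nat) (m : 'I_n -> nat) : Prop :=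
  [/\ forall a, (l a <= n)%N, forall i, (m i <= k)%N &
      (\sum_(a < k) l a)%N = (\sum_(i < n) m i)%N].

Definition mon_weight (l : 'I_k -> nat) (m : 'I_n -> nat) (S : monT) : bool :=
  [forall i, #|[set a | (a, i) \in S]| == m i] &&
  [forall a, #|[set i | (a, i) \in S]| == l a].

Definition in_Plm (l : 'I_k -> nat) (m : 'I_n -> nat) (v : 'cV[F]_dimP) : Prop :=
  forall r, v r 0 != 0 -> mon_weight l m (mon r).

Definition plm_invariant (l : 'I_k -> nat) (m : 'I_n -> nat) (M : 'M[F]_dimP) : Prop :=
  forall v, in_Plm l m v -> in_Plm l m (M *m v).

End Grassmann.

(* Give the monomial xi_S the weight in Z^(k+n) made of its row sums and its
   column sums, so that P_kn[l,m] is a weight space.  The operator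
   xi_u d_v shifts weights by wt u - wt v; hence pi_z(e_ij t^s) has weight
   eps_i - eps_j and pi_{-alpha}(e_ab t^s) has weight eps_a - eps_b.  In the
   matrix ((d/dx - beta_i) delta_ij - e_ji(x)) the (i,j) entry then has weight
   eps_j - eps_i, so the term of the row determinant indexed by sigma has
   weight sum_i (eps_(sigma i) - eps_i) = 0.  Every B_ij, and so the whole
   algebra they generate, preserves weight spaces. *)
From mathcomp Require Import all_boot all_order all_algebra all_fingroup.
From mathcomp Require Import Rstruct complex.

Set Implicit Arguments.
Unset Strict Implicit.
Unset Printing Implicit Defensive.

Import GRing.Theory.
Local Open Scope ring_scope.

Section GradedDiffOps.
Variables (A : pzRingType) (G : zmodType) (homog : A -> G -> Prop).
Hypothesis homog0 : forall w, homog 0 w.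
Hypothesis homog1 : homog 1 0.
Hypothesis homogD : forall a b w, homog a w -> homog b w -> homog (a + b) w.
Hypothesis homogN : forall a w, homog a w -> homog (- a) w.
Hypothesis homogM :
  forall a b w1 w2, homog a w1 -> homog b w2 -> homog (a * b) (w1 + w2).

Lemma homog_sum I (r : seq I) (P : pred I) (F : I -> A) w :
  (forall i, P i -> homog (F i) w) -> homog (\sum_(i <- r | P i) F i) w.
Proof.
by move=> hF; elim/big_rec: _ => [|i a /hF]; [apply: homog0 | apply: homogD].
Qed.

Lemma homog_muln a w c : homog a w -> homog (a *+ c) w.
Proof.
by move=> ha; elim: c => [|c ihc]; [apply: homog0 | rewrite mulrS; apply: homogD].
Qed.

Definition ser_homog (f : series A) (w : G) := forall j, homog (f j) w.
Definition dop_homog (P : dop A) (w : G) := forall p, ser_homog (dcoef P p) w.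

Lemma ser_homog_ser0 w : ser_homog (ser0 A) w.
Proof. by move=> j; apply: homog0. Qed.

Lemma ser_homog_ser1 : ser_homog (ser1 A) 0.
Proof. by case=> [|j] /=; [apply: homog1 | apply: homog0]. Qed.

Lemma ser_homog_serC a w : homog a w -> ser_homog (serC a) w.
Proof. by move=> ha [|j] /=; [|apply: homog0]. Qed.

Lemma ser_homog_seradd f g w :
  ser_homog f w -> ser_homog g w -> ser_homog (seradd f g) w.
Proof. by move=> hf hg j; apply: homogD. Qed.

Lemma ser_homog_seropp f w : ser_homog f w -> ser_homog (seropp f) w.
Proof. by move=> hf j; apply: homogN. Qed.

Lemma ser_homog_sermul f g w1 w2 :
  ser_homog f w1 -> ser_homog g w2 -> ser_homog (sermul f g) (w1 + w2).
Proof. by move=> hf hg j; apply: homog_sum => i _; apply: homogM. Qed.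

Lemma ser_homog_iter_serD f w r :
  ser_homog f w -> ser_homog (iter r (@serD A) f) w.
Proof.
move=> hf; elim: r => //= r ihr [|j] /=; first exact: homog0.
exact/homogN/homog_muln.
Qed.

Lemma dop_homog_dop0 w : dop_homog (dop0 A) w.
Proof. by move=> p; rewrite /dcoef nth_nil; apply: ser_homog_ser0. Qed.

Lemma dop_homog_dopS f w : ser_homog f w -> dop_homog (dopS f) w.
Proof. by move=> hf [|[|p]] //=; apply: ser_homog_ser0. Qed.

Lemma dop_homog_dop1 : dop_homog (dop1 A) 0.
Proof. exact/dop_homog_dopS/ser_homog_ser1. Qed.

Lemma dop_homog_dopD : dop_homog (dopD A) 0.
Proof.
case=> [|[|p]]; rewrite /dcoef /= ?nth_nil;
  [apply: ser_homog_ser0 | apply: ser_homog_ser1 | apply: ser_homog_ser0].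
Qed.

Lemma dop_homog_dadd P Q w :
  dop_homog P w -> dop_homog Q w -> dop_homog (dadd P Q) w.
Proof.
move=> hP hQ p; rewrite /dcoef /dadd.
have [lt_p|le_p] := ltnP p (maxn (size P) (size Q)).
  by rewrite nth_mkseq //; apply: ser_homog_seradd.
by rewrite nth_default ?size_mkseq //; apply: ser_homog_ser0.
Qed.

Lemma dop_homog_dopp P w : dop_homog P w -> dop_homog (dopp P) w.
Proof.
move=> hP p; rewrite /dcoef /dopp.
have [lt_p|le_p] := ltnP p (size P).
  by rewrite (nth_map (ser0 A)) //; apply/ser_homog_seropp/hP.
by rewrite nth_default ?size_map //; apply: ser_homog_ser0.
Qed.

Lemma dop_homog_dmul P Q w1 w2 :
  dop_homog P w1 -> dop_homog Q w2 -> dop_homog (dmul P Q) (w1 + w2).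
Proof.
move=> hP hQ s; rewrite /dcoef /dmul.
have [lt_s|le_s] := ltnP s (size P + size Q); last first.
  by rewrite nth_default ?size_mkseq //; apply: ser_homog_ser0.
rewrite nth_mkseq // => j.
apply: homog_sum => p _; apply: homog_sum => q _; apply: homog_sum => r _.
rewrite /dmul_term; case: ifP => _; last exact: homog0.
exact/homog_muln/ser_homog_sermul/ser_homog_iter_serD.
Qed.

Section RowDeterminant.
Variables (N : nat) (M : 'I_N -> 'I_N -> dop A) (f : 'I_N -> G).
Hypothesis homog_entry : forall i j, dop_homog (M i j) (f j - f i).

Lemma dop_homog_perm_prod (s : 'S_N) (r : seq 'I_N) :
  dop_homog (foldr (fun i acc => dmul (M i (s i)) acc) (dop1 A) r)
            (\sum_(i <- r) (f (s i) - f i)).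
Proof.
elim: r => [|i r ihr] /=; first by rewrite big_nil; apply: dop_homog_dop1.
by rewrite big_cons; apply: dop_homog_dmul.
Qed.

Lemma sumrB_perm0 (s : 'S_N) : \sum_(i <- enum 'I_N) (f (s i) - f i) = 0.
Proof.
rewrite big_enum /= sumrB [X in _ - X](reindex_inj (@perm_inj _ s)) /=.
by apply/eqP; rewrite subr_eq0; apply/eqP/eq_bigl.
Qed.

Lemma dop_homog_rdet : dop_homog (rdet M) 0.
Proof.
rewrite /rdet; elim: (enum _) => [|s r ihr] /=; first exact: dop_homog_dop0.
apply: dop_homog_dadd => //.
have := dop_homog_perm_prod s (enum 'I_N); rewrite sumrB_perm0.
by case: ifP => _ //; apply: dop_homog_dopp.
Qed.

End RowDeterminant.

Lemma dop_homog_bethe_coef N (rep : 'I_N -> 'I_N -> nat -> A) (beta : 'I_N -> A)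
    (f : 'I_N -> G) :
  (forall i j s, homog (rep i j s) (f i - f j)) -> (forall i, homog (beta i) 0) ->
  forall i j, homog (bethe_coef rep beta i j) 0.
Proof.
move=> hrep hbeta i j; apply: (dop_homog_rdet (f := f)) => {}i {}j.
apply: dop_homog_dadd.
  have [<-|_] := eqVneq i j; last exact: dop_homog_dop0.
  rewrite subrr; apply: dop_homog_dadd; first exact: dop_homog_dopD.
  exact/dop_homog_dopS/ser_homog_serC/homogN.
by apply/dop_homog_dopp/dop_homog_dopS => -[|s] /=; [apply: homog0 | apply: hrep].
Qed.

End GradedDiffOps.

Lemma mulmx_entry_neq0 (R : pzSemiRingType) d1 d2 d3
    (M : 'M[R]_(d1, d2)) (N : 'M[R]_(d2, d3)) r c :
  (M *m N) r c != 0 -> exists2 j, M r j != 0 & N j c != 0.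
Proof.
rewrite mxE => nz.
have [j _ nzj] : exists2 j, true & M r j * N j c != 0.
  apply/exists_inP; apply: contraNT nz => /exists_inPn nzF.
  by apply/eqP; apply: big1 => j _; apply/eqP/negbNE/nzF.
by exists j; apply: contraNneq nzj => ->; rewrite ?mul0r ?mulr0.
Qed.

Section MatrixGrading.
Variables (R : pzRingType) (G : zmodType) (d : nat) (deg : 'I_d -> G).

Definition mx_homog (M : 'M[R]_d) (w : G) :=
  forall r c, M r c != 0 -> deg r = deg c + w.

Lemma mx_homog0 w : mx_homog 0 w.
Proof. by move=> r c; rewrite mxE eqxx. Qed.

Lemma mx_homog_scalar a : mx_homog a%:M 0.
Proof.
move=> r c; rewrite mxE addr0; have [->//|_] := eqVneq r c.
by rewrite mulr0n eqxx.
Qed.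

Lemma mx_homog1 : mx_homog 1 0.
Proof. exact: mx_homog_scalar. Qed.

Lemma mx_homogD M N w : mx_homog M w -> mx_homog N w -> mx_homog (M + N) w.
Proof.
move=> hM hN r c; rewrite mxE.
by have [->|/hM //] := eqVneq (M r c) 0; rewrite add0r; apply: hN.
Qed.

Lemma mx_homogN M w : mx_homog M w -> mx_homog (- M) w.
Proof. by move=> hM r c; rewrite mxE oppr_eq0; apply: hM. Qed.

Lemma mx_homogZ a M w : mx_homog M w -> mx_homog (a *: M) w.
Proof.
move=> hM r c; rewrite mxE.
by have [->|/hM //] := eqVneq (M r c) 0; rewrite mulr0 eqxx.
Qed.

Lemma mx_homogM M N w1 w2 :
  mx_homog M w1 -> mx_homog N w2 -> mx_homog (M *m N) (w1 + w2).
Proof.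
move=> hM hN r c /mulmx_entry_neq0[j /hM -> /hN ->].
by rewrite addrAC addrA.
Qed.

Lemma mx_homog_bethe_coef N (rep : 'I_N -> 'I_N -> nat -> 'M[R]_d)
    (beta : 'I_N -> R) (f : 'I_N -> G) :
  (forall i j s, mx_homog (rep i j s) (f i - f j)) ->
  forall i j, mx_homog (bethe_coef rep (fun a => (beta a)%:M) i j) 0.
Proof.
move=> hrep; apply: (dop_homog_bethe_coef (homog := mx_homog)) hrep _ => //.
- exact: mx_homog0.
- exact: mx_homog1.
- exact: mx_homogD.
- exact: mx_homogN.
- by move=> M1 M2 w1 w2 h1 h2; rewrite -mulmxE; apply: mx_homogM.
- by move=> a; apply: mx_homog_scalar.
Qed.

Lemma mx_homog0_mulmx_support M p (v : 'M[R]_(d, p)) r j :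
  mx_homog M 0 -> (M *m v) r j != 0 -> exists2 c, v c j != 0 & deg r = deg c.
Proof. by move=> hM /mulmx_entry_neq0[c /hM]; rewrite addr0; exists c. Qed.

End MatrixGrading.

Lemma mx_homog_gen_alg (F : fieldType) (G : zmodType) d (deg : 'I_d -> G)
    (P : 'M[F]_d -> Prop) M :
  (forall M, P M -> mx_homog deg M 0) -> gen_alg P M -> mx_homog deg M 0.
Proof.
move=> hP; elim=> {M} [M /hP //| |c M _ ihM|M1 M2 _ ih1 _ ih2|M1 M2 _ ih1 _ ih2].
- exact: mx_homog_scalar.
- exact: mx_homogZ.
- exact: mx_homogD.
- by rewrite -[0]addr0; apply: mx_homogM.
Qed.

Lemma sum_row_indicator (I J : finType) (S : {set I * J}) a :
  (\sum_(x in S) (x.1 == a))%N = #|[set j | (a, j) \in S]|.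
Proof.
have -> : (\sum_(x in S) (x.1 == a) = \sum_b \sum_j ((b, j) \in S) && (b == a))%N.
  by rewrite pair_bigA big_mkcond; apply: eq_bigr => -[b j] _ /=; case: ifP.
rewrite (bigD1 a) //= [X in (_ + X)%N]big1 ?addn0 => [|b /negbTE nba]; last first.
  by apply: big1 => j _; rewrite nba andbF.
rewrite -sum1dep_card [RHS]big_mkcond; apply: eq_bigr => j _.
by rewrite eqxx andbT; case: ifP.
Qed.

Lemma sum_col_indicator (I J : finType) (S : {set I * J}) j :
  (\sum_(x in S) (x.2 == j))%N = #|[set a | (a, j) \in S]|.
Proof.
have -> : (\sum_(x in S) (x.2 == j) = \sum_i \sum_a ((a, i) \in S) && (i == j))%N.
  rewrite exchange_big pair_bigA big_mkcond.
  by apply: eq_bigr => -[a i] _ /=; case: ifP.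
rewrite (bigD1 j) //= [X in (_ + X)%N]big1 ?addn0 => [|i /negbTE nij]; last first.
  by apply: big1 => a _; rewrite nij andbF.
rewrite -sum1dep_card [RHS]big_mkcond; apply: eq_bigr => a _.
by rewrite eqxx andbT; case: ifP.
Qed.

Section GrassmannWeight.
Variables (F : fieldType) (k n : nat).

Definition weight := {ffun 'I_k + 'I_n -> int}.
Definition unit_wt (t : 'I_k + 'I_n) : weight := [ffun t' => (t == t' : nat)%:Z].
Definition var_wt (x : var k n) : weight := unit_wt (inl x.1) + unit_wt (inr x.2).
Definition mon_wt (S : monT k n) : weight := \sum_(x in S) var_wt x.
Definition basis_wt (r : 'I_(dimP k n)) : weight := mon_wt (mon r).

Lemma mx_homog_xi_d u v :
  mx_homog basis_wt (@xi_d F k n u v) (var_wt u - var_wt v).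
Proof.
move=> r c; rewrite mxE /=; case: ifP => [|_]; last by rewrite eqxx.
case/and3P => vS uSv /eqP mon_r _.
rewrite /basis_wt mon_r /mon_wt big_setU1 //= (big_setD1 v vS) /=.
by rewrite [RHS]addrC addrA subrK.
Qed.

Lemma mx_homog_pi_n (z : 'I_k -> F) i j s :
  mx_homog basis_wt (pi_n z i j s) (unit_wt (inr i) - unit_wt (inr j)).
Proof.
apply: (homog_sum (mx_homog0 _)) => [M N w|a _]; first exact: mx_homogD.
apply: mx_homogZ.
have -> : unit_wt (inr i) - unit_wt (inr j) = var_wt (a, i) - var_wt (a, j).
  by rewrite opprD addrACA subrr add0r.
exact: mx_homog_xi_d.
Qed.

Lemma mx_homog_pi_k (alpha : 'I_n -> F) a b s :
  mx_homog basis_wt (pi_k alpha a b s) (unit_wt (inl a) - unit_wt (inl b)).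
Proof.
apply: (homog_sum (mx_homog0 _)) => [M N w|i _]; first exact: mx_homogD.
apply: mx_homogZ.
have -> : unit_wt (inl a) - unit_wt (inl b) = var_wt (a, i) - var_wt (b, i).
  by rewrite opprD addrACA subrr addr0.
exact: mx_homog_xi_d.
Qed.

Lemma mon_wt_row (S : monT k n) a :
  mon_wt S (inl a) = #|[set i | (a, i) \in S]|%:Z.
Proof.
rewrite /mon_wt sum_ffunE -sum_row_indicator -[RHS]intz sumMz.
by apply: eq_bigr => x _; rewrite !ffunE addr0 intz.
Qed.

Lemma mon_wt_col (S : monT k n) i :
  mon_wt S (inr i) = #|[set a | (a, i) \in S]|%:Z.
Proof.
rewrite /mon_wt sum_ffunE -sum_col_indicator -[RHS]intz sumMz.
by apply: eq_bigr => x _; rewrite !ffunE add0r intz.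
Qed.

Lemma mon_weight_wt l m (S1 S2 : monT k n) :
  mon_wt S1 = mon_wt S2 -> mon_weight l m S1 = mon_weight l m S2.
Proof.
move=> eq_wt; rewrite /mon_weight; congr (_ && _); apply: eq_forallb => x.
  by rewrite -eqz_nat -mon_wt_col eq_wt mon_wt_col eqz_nat.
by rewrite -eqz_nat -mon_wt_row eq_wt mon_wt_row eqz_nat.
Qed.

Lemma plm_invariant_homog0 l m (M : 'M[F]_(dimP k n)) :
  mx_homog basis_wt M 0 -> plm_invariant l m M.
Proof.
move=> hM v hv r /(mx_homog0_mulmx_support hM)[c /hv].
by rewrite /basis_wt => + eq_wt; rewrite (mon_weight_wt l m eq_wt).
Qed.

End GrassmannWeight.

Theorem lemma5p5 (k n : nat) (alpha : 'I_n -> Cplx) (z : 'I_k -> Cplx) :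
  injective alpha -> injective z ->
  forall (l : 'I_k -> nat) (m : 'I_n -> nat), Zkn l m ->
  (forall M, bethe_image (@pi_n Cplx k n z) alpha M -> @plm_invariant Cplx k n l m M) /\
  (forall M, bethe_image (@pi_k Cplx k n alpha) z M -> @plm_invariant Cplx k n l m M).
Proof.
move=> _ _ l m _; split=> M /mx_homog_gen_alg hM; apply/plm_invariant_homog0/hM.
- by move=> _ [i [j [_ _ ->]]]; apply/mx_homog_bethe_coef/mx_homog_pi_n.
- by move=> _ [i [j [_ _ ->]]]; apply/mx_homog_bethe_coef/mx_homog_pi_k.
Qed.
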